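(* There is an absolute constant $C>0$ such that for all $k\ge 2$, $\gamma\in(0,1]$, $\varepsilon\in(0,1]$ and $n\ge C\,k^{3/2}/(\gamma^2\varepsilon^2)$ the following test is a uniformity tester over $[k]$ with distance parameter $\gamma$: each of the $n$ users applies $\varepsilon$-RAPPOR to its sample $X_j$ and sends $b_j\in\{0,1\}^k$; the curator computes $N_x=\sum_{j}\mathbf 1\{b_{jx}=1\}$, $\lambda=\alpha_R/k+\beta_R$ and $T=\sum_{x\in[k]}\big((N_x-(n-1)\lambda)^2-N_x\big)+k(n-1)\lambda^2$, and outputs ``uniform'' if $T<n(n-1)\alpha_R^2\gamma^2/k$ and ``not uniform'' otherwise.
   Context: $\Delta([k])$ is the set of probability distributions on $[k]=\{1,\dots,k\}$, $u$ the uniform distribution on $[k]$, $d_{TV}(p,q)=\frac12\|p-q\|_1$. Users hold i.i.d. samples $X_1,\dots,X_n$ from an unknown $p\in\Delta([k])$. The $\varepsilon$-RAPPOR mechanism maps $x\in[k]$ to a random vector $b\in\{0,1\}^k$ obtained from the one-hot vector $e_x$ by flipping each coordinate independently with probability $\beta_R=1/(e^{\varepsilon/2}+1)$; $\alpha_R=(e^{\varepsilon/2}-1)/(e^{\varepsilon/2}+1)$. A uniformity tester with distance parameter $\gamma$ must, for every $p$, output ``uniform'' with probability at least $2/3$ if $p=u$ and ``not uniform'' with probability at least $2/3$ if $d_{TV}(p,u)>\gamma$. *)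

From Stdlib Require Import Reals.
From mathcomp Require Import all_boot.

Set Implicit Arguments.
Unset Strict Implicit.

Local Open Scope R_scope.

Definition Rsum {T : finType} (F : T -> R) : R := \big[Rplus/R0]_(i : T) F i.
Definition Rprod {T : finType} (F : T -> R) : R := \big[Rmult/R1]_(i : T) F i.

(* [k] is represented by 'I_k = {0,...,k-1}. *)
Definition is_dist (k : nat) (p : 'I_k -> R) : Prop :=
  (forall x, 0 <= p x) /\ Rsum p = 1.

Definition unif (k : nat) : 'I_k -> R := fun _ => / INR k.

Definition dTV (k : nat) (p q : 'I_k -> R) : R :=
  / 2 * Rsum (fun x => Rabs (p x - q x)).

Definition beta_R (eps : R) : R := / (exp (eps / 2) + 1).
Definition alpha_R (eps : R) : R := (exp (eps / 2) - 1) / (exp (eps / 2) + 1).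

(* Probability that eps-RAPPOR maps x to the bit vector b: each coordinate of
   the one-hot vector e_x is flipped independently with probability beta_R. *)
Definition rappor_prob (k : nat) (eps : R) (x : 'I_k) (b : {ffun 'I_k -> bool}) : R :=
  Rprod (fun y : 'I_k => if b y == (y == x) then 1 - beta_R eps else beta_R eps).

Definition outcome (n k : nat) : finType :=
  ({ffun 'I_n -> 'I_k} * {ffun 'I_n -> {ffun 'I_k -> bool}})%type.

Definition outcome_prob (n k : nat) (eps : R) (p : 'I_k -> R) (o : outcome n k) : R :=
  Rprod (fun j : 'I_n => p (o.1 j) * rappor_prob eps (o.1 j) (o.2 j)).

Definition Ncount (n k : nat) (B : {ffun 'I_n -> {ffun 'I_k -> bool}}) (x : 'I_k) : nat :=
  #|[pred j : 'I_n | B j x]|.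

Definition lambda_R (k : nat) (eps : R) : R := alpha_R eps / INR k + beta_R eps.

Definition statT (n k : nat) (eps : R) (B : {ffun 'I_n -> {ffun 'I_k -> bool}}) : R :=
  Rsum (fun x : 'I_k =>
          (INR (Ncount B x) - (INR n - 1) * lambda_R k eps) ^ 2 - INR (Ncount B x))
  + INR k * (INR n - 1) * (lambda_R k eps) ^ 2.

Definition test_says_uniform (n k : nat) (eps gamma : R)
    (B : {ffun 'I_n -> {ffun 'I_k -> bool}}) : bool :=
  if Rlt_dec (statT eps B) (INR n * (INR n - 1) * (alpha_R eps) ^ 2 * gamma ^ 2 / INR k)
  then true else false.

Definition prob_says_uniform (n k : nat) (eps gamma : R) (p : 'I_k -> R) : R :=
  Rsum (fun o : outcome n k =>
          if test_says_uniform eps gamma o.2 then outcome_prob eps p o else 0).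

Definition prob_says_not_uniform (n k : nat) (eps gamma : R) (p : 'I_k -> R) : R :=
  Rsum (fun o : outcome n k =>
          if test_says_uniform eps gamma o.2 then 0 else outcome_prob eps p o).

Definition is_uniformity_tester (n k : nat) (eps gamma : R) : Prop :=
  forall p : 'I_k -> R, is_dist p ->
    (p = @unif k -> prob_says_uniform n eps gamma p >= 2 / 3) /\
    (dTV p (@unif k) > gamma -> prob_says_not_uniform n eps gamma p >= 2 / 3).

(* Write q_x = beta + alpha p_x for the probability that bit x of a report is set, so that
   q - lambda = alpha (p - u).  Centring the bits, Z_jx = 1{b_jx} - q_x, the statistic splits as
     T = n (n-1) |q - lambda|^2 + 2 (n-1) sum_j sum_x (q_x - lambda) Z_jx + W,
   W = sum_x sum_(j <> l) Z_jx Z_lx.  The last two terms are centred; the linear one has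
   second moment at most 2 n |q - lambda|^2, and W, a degenerate U-statistic, has second moment
   at most 2 n^2 (k + 1) since the covariance matrix of one report's bits has squared Frobenius
   norm at most k + 1.  Chebyshev's inequality then concludes: for p = u the mean is 0, while for
   d_TV(p, u) > gamma Cauchy-Schwarz gives |p - u|^2 > 4 gamma^2 / k, so the mean is at least
   four times the threshold; the sample-size condition makes both error probabilities <= 1/3. *)

From Stdlib Require Import Reals Lra.
From HB Require Import structures.
From mathcomp Require Import all_boot.

Set Implicit Arguments.
Unset Strict Implicit.

Local Open Scope R_scope.

Lemma RplusA : associative Rplus. Proof. by move=> *; ring. Qed.
Lemma RmultA : associative Rmult. Proof. by move=> *; ring. Qed.
Lemma Rmult_addl : left_distributive Rmult Rplus. Proof. by move=> *; ring. Qed.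
Lemma Rmult_addr : right_distributive Rmult Rplus. Proof. by move=> *; ring. Qed.

HB.instance Definition _ := Monoid.isComLaw.Build R R0 Rplus RplusA Rplus_comm Rplus_0_l.
HB.instance Definition _ := Monoid.isComLaw.Build R R1 Rmult RmultA Rmult_comm Rmult_1_l.
HB.instance Definition _ := Monoid.isMulLaw.Build R R0 Rmult Rmult_0_l Rmult_0_r.
HB.instance Definition _ := Monoid.isAddLaw.Build R Rmult Rplus Rmult_addl Rmult_addr.

Definition b2R (b : bool) : R := if b then 1 else 0.

Lemma b2R_sq b : b2R b * b2R b = b2R b.
Proof. by case: b => /=; ring. Qed.

Section RealBigops.
Variable T : finType.
Implicit Types (f g : T -> R) (c : R).

Lemma eq_Rsum f g : f =1 g -> Rsum f = Rsum g.
Proof. by move=> fg; apply: eq_bigr => i _. Qed.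

Lemma eq_Rprod f g : f =1 g -> Rprod f = Rprod g.
Proof. by move=> fg; apply: eq_bigr => i _. Qed.

Lemma RsumD f g : Rsum (fun i => f i + g i) = Rsum f + Rsum g.
Proof. exact: big_split. Qed.

Lemma Rsum_distrr c f : c * Rsum f = Rsum (fun i => c * f i).
Proof. exact: big_distrr. Qed.

Lemma Rsum_distrl c f : Rsum f * c = Rsum (fun i => f i * c).
Proof. exact: big_distrl. Qed.

Lemma RsumB f g : Rsum (fun i => f i - g i) = Rsum f - Rsum g.
Proof.
rewrite (eq_Rsum (g := fun i => f i + (-1) * g i)) => [|i]; last by ring.
by rewrite RsumD -Rsum_distrr; ring.
Qed.

Lemma Rsum0 : Rsum (fun _ : T => 0) = 0.
Proof. exact: big1. Qed.

Lemma Rsum_const c : Rsum (fun _ : T => c) = INR #|T| * c.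
Proof.
rewrite /Rsum big_const; elim: #|T| => [|m IH]; first (rewrite /=; ring).
by rewrite iterS IH S_INR; ring.
Qed.

Lemma ler_Rsum f g : (forall i, f i <= g i) -> Rsum f <= Rsum g.
Proof. by move=> fg; apply: (big_ind2 Rle) => [|*|i _]; [lra | lra | apply: fg]. Qed.

Lemma Rsum_delta (j : T) f : Rsum (fun i => if i == j then f i else 0) = f j.
Proof. by rewrite /Rsum (bigD1 j) //= eqxx big1 => [|i /negbTE ->]; first ring. Qed.

Lemma RprodM f g : Rprod (fun i => f i * g i) = Rprod f * Rprod g.
Proof. exact: big_split. Qed.

Lemma Rprod1 : Rprod (fun _ : T => 1) = 1.
Proof. exact: big1. Qed.

Lemma Rprod_eq0 (j : T) f : f j = 0 -> Rprod f = 0.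
Proof. by move=> fj0; rewrite /Rprod (bigD1 j) //= fj0; ring. Qed.

Lemma Rprod_ge0 f : (forall i, 0 <= f i) -> 0 <= Rprod f.
Proof.
move=> f0; apply: (big_ind (Rle 0)) => [|x y *|i _]; [lra | exact: Rmult_le_pos | exact: f0].
Qed.

Lemma Rprod_delta (j : T) f : Rprod (fun i => if i == j then f i else 1) = f j.
Proof. by rewrite /Rprod (bigD1 j) //= eqxx big1 => [|i /negbTE ->]; first ring. Qed.

Lemma Rprod_delta2 (j l : T) f g : j != l ->
  Rprod (fun i => if i == j then f i else if i == l then g i else 1) = f j * g l.
Proof.
move=> jl; rewrite /Rprod (bigD1 j) //= eqxx (bigD1 l) /=; last by rewrite eq_sym.
rewrite eq_sym (negbTE jl) eqxx big1 => [|i /andP [/negbTE -> /negbTE ->]] //; ring.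
Qed.

Lemma Rsum_Cauchy_Schwarz f : Rsum f * Rsum f <= INR #|T| * Rsum (fun i => f i * f i).
Proof.
set S2 := Rsum (fun i => f i * f i).
have half_sum i :
    Rsum (fun j => / 2 * (f i * f i + f j * f j)) = / 2 * (INR #|T| * (f i * f i) + S2).
  by rewrite -Rsum_distrr RsumD Rsum_const.
rewrite Rsum_distrl.
apply: Rle_trans (_ : Rsum (fun i => Rsum (fun j => / 2 * (f i * f i + f j * f j))) <= _).
  apply: ler_Rsum => i; rewrite Rsum_distrr; apply: ler_Rsum => j.
  have := Rle_0_sqr (f i - f j); rewrite /Rsqr; lra.
rewrite (eq_Rsum half_sum) -Rsum_distrr RsumD -Rsum_distrr Rsum_const -/S2; lra.
Qed.

End RealBigops.

Lemma exchange_Rsum (T1 T2 : finType) (F : T1 -> T2 -> R) :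
  Rsum (fun i => Rsum (F i)) = Rsum (fun j => Rsum (F^~ j)).
Proof. by rewrite /Rsum exchange_big. Qed.

Lemma Rsum_pair (T1 T2 : finType) (F : T1 -> T2 -> R) :
  Rsum (fun c : (T1 * T2)%type => F c.1 c.2) = Rsum (fun i => Rsum (F i)).
Proof. by rewrite /Rsum pair_bigA. Qed.

Lemma Rprod_Rsum (I J : finType) (F : I -> J -> R) :
  Rprod (fun i => Rsum (F i)) = Rsum (fun h : {ffun I -> J} => Rprod (fun i => F i (h i))).
Proof. by rewrite /Rprod /Rsum bigA_distr_bigA. Qed.

Lemma Rsum_mulRsum (T1 T2 : finType) (f : T1 -> R) (g : T2 -> R) :
  Rsum f * Rsum g = Rsum (fun i => Rsum (fun j => f i * g j)).
Proof. by rewrite Rsum_distrl; apply: eq_Rsum => i; rewrite Rsum_distrr. Qed.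


Lemma Rsum_offdiag (T : finType) (f : T -> R) :
  Rsum (fun i => Rsum (fun j => if i == j then 0 else f i * f j)) =
  Rsum f * Rsum f - Rsum (fun i => f i * f i).
Proof.
rewrite Rsum_mulRsum -RsumB; apply: eq_Rsum => i.
rewrite -(Rsum_delta i (fun j => f j * f j)) -RsumB; apply: eq_Rsum => j.
by rewrite eq_sym; case: eqP => [->|_]; ring.
Qed.

Lemma Rsum2_b2R_eq (T : finType) (a b : T * T) c :
  Rsum (fun i => Rsum (fun j => (b2R ((i, j) == a) + b2R ((i, j) == b)) * c)) = 2 * c.
Proof.
rewrite -(Rsum_pair (fun i j => (b2R ((i, j) == a) + b2R ((i, j) == b)) * c)).
rewrite (eq_Rsum (g := fun ij => (if ij == a then c else 0) + (if ij == b then c else 0))).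
  by rewrite RsumD !Rsum_delta; ring.
by case=> i j /=; case: (_ == a); case: (_ == b); rewrite /b2R; ring.
Qed.

Lemma Rsum_Chebyshev (T : finType) (w Y : T -> R) (P : pred T) (m d : R) :
  (forall i, 0 <= w i) -> (forall i, P i -> d ^ 2 <= (Y i - m) ^ 2) ->
  Rsum (fun i => if P i then w i else 0) * d ^ 2 <= Rsum (fun i => w i * (Y i - m) ^ 2).
Proof.
move=> w_ge0 dev; rewrite Rsum_distrl; apply: ler_Rsum => i.
have := w_ge0 i; have := pow2_ge_0 (Y i - m).
by case: (boolP (P i)) => [/dev|_]; nra.
Qed.

Section RapporParameters.
Variable eps : R.

Lemma alpha_R_beta_R : alpha_R eps = 1 - 2 * beta_R eps.
Proof.
have e_pos := exp_pos (eps / 2).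
by rewrite /alpha_R /beta_R; field; lra.
Qed.

Hypothesis eps_ge0 : 0 <= eps.

Lemma beta_R_bounds : 0 < beta_R eps <= 1 / 2.
Proof.
have e_ge1 := exp_ineq1_le (eps / 2).
rewrite /beta_R; split; first by apply: Rinv_0_lt_compat; lra.
by rewrite /Rdiv Rmult_1_l; apply: Rinv_le_contravar; lra.
Qed.

Lemma alpha_R_bounds : 0 <= alpha_R eps < 1.
Proof. by have := beta_R_bounds; rewrite alpha_R_beta_R; lra. Qed.

Lemma alpha_R_ge : eps <= 1 -> eps / 6 <= alpha_R eps.
Proof.
move=> eps_le1.
have e_lb := exp_ineq1_le (eps / 2).
have e_ub : exp (eps / 2) <= 2.
  have sq : exp (eps / 2) * exp (eps / 2) = exp eps by rewrite -exp_plus; congr exp; field.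
  have : exp eps <= exp 1.
    by have [->|?] := Req_dec eps 1; [lra | apply/Rlt_le/exp_increasing; lra].
  have := exp_le_3; have := exp_pos (eps / 2); nra.
rewrite /alpha_R; apply: (Rmult_le_reg_r (exp (eps / 2) + 1)); first lra.
have -> : (exp (eps / 2) - 1) / (exp (eps / 2) + 1) * (exp (eps / 2) + 1) = exp (eps / 2) - 1.
  by field; lra.
nra.
Qed.

End RapporParameters.

Section SingleReport.
Variables (k : nat) (eps : R) (p : 'I_k -> R).
Hypothesis p_dist : is_dist p.

Local Notation alpha := (alpha_R eps).
Local Notation beta := (beta_R eps).

Definition report : finType := ('I_k * {ffun 'I_k -> bool})%type.

Definition E1 (g : report -> R) : R :=
  Rsum (fun c : report => p c.1 * rappor_prob eps c.1 c.2 * g c).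

Lemma E1_pair g :
  E1 g = Rsum (fun z => Rsum (fun b => p z * rappor_prob eps z b * g (z, b))).
Proof.
by rewrite -(Rsum_pair (fun z b => p z * rappor_prob eps z b * g (z, b))); apply: eq_Rsum => -[].
Qed.

Lemma eq_E1 f g : f =1 g -> E1 f = E1 g.
Proof. by move=> fg; apply: eq_Rsum => c; rewrite fg. Qed.

Lemma E1B f g : E1 (fun c => f c - g c) = E1 f - E1 g.
Proof. by rewrite /E1 -RsumB; apply: eq_Rsum => c; ring. Qed.

Lemma E1Z a f : E1 (fun c => a * f c) = a * E1 f.
Proof. by rewrite /E1 Rsum_distrr; apply: eq_Rsum => c; ring. Qed.

Lemma E1_sum (I : finType) (F : I -> report -> R) :
  E1 (fun c => Rsum (F^~ c)) = Rsum (fun x => E1 (F x)).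
Proof.
by rewrite /E1 -exchange_Rsum; apply: eq_Rsum => c; rewrite Rsum_distrr.
Qed.

Definition flip_prob (z y : 'I_k) (b : bool) : R :=
  if b == (y == z) then 1 - beta else beta.

Lemma flip_probE z y : flip_prob z y true = if y == z then 1 - beta else beta.
Proof. by rewrite /flip_prob; case: (y == z). Qed.

Lemma flip_prob_sum z y : flip_prob z y true + flip_prob z y false = 1.
Proof. by rewrite /flip_prob; case: (y == z) => /=; ring. Qed.

Lemma E1_coordwise (H : 'I_k -> 'I_k -> bool -> R) :
  E1 (fun c => Rprod (fun y => H c.1 y (c.2 y))) =
  Rsum (fun z => p z * Rprod (fun y =>
    flip_prob z y true * H z y true + flip_prob z y false * H z y false)).
Proof.
rewrite E1_pair; apply: eq_Rsum => z.
have -> : Rprod (fun y => flip_prob z y true * H z y true + flip_prob z y false * H z y false)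
        = Rprod (fun y => Rsum (fun b => flip_prob z y b * H z y b)).
  by apply: eq_Rprod => y; rewrite /Rsum big_bool.
rewrite Rprod_Rsum Rsum_distrr; apply: eq_Rsum => b.
by rewrite RprodM /rappor_prob -/(flip_prob _ _ _) Rmult_assoc.
Qed.

Lemma E1_const a : E1 (fun _ => a) = a.
Proof.
have E1_1 : E1 (fun _ => 1) = 1.
  rewrite -(eq_E1 (f := fun c => Rprod (fun y => (fun _ _ _ => 1) c.1 y (c.2 y)))) => [|c];
    last exact: Rprod1.
  rewrite (E1_coordwise (fun _ _ _ => 1)) (eq_Rsum (g := p)) ?(proj2 p_dist) // => z.
  rewrite (eq_Rprod (g := fun _ => 1)) => [|y]; first by rewrite Rprod1 Rmult_1_r.
  by rewrite !Rmult_1_r flip_prob_sum.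
rewrite (eq_E1 (g := fun _ => a * 1)) => [|c]; last by ring.
by rewrite E1Z E1_1; ring.
Qed.

Definition bit (x : 'I_k) (c : report) : R := b2R (c.2 x).

Lemma E1_bit x : E1 (bit x) = beta + alpha * p x.
Proof.
rewrite -(eq_E1 (f := fun c => Rprod (fun y =>
    (fun _ y b => if y == x then b2R b else 1) c.1 y (c.2 y)))) => [|c];
  last exact: (Rprod_delta x (fun y => b2R (c.2 y))).
rewrite (E1_coordwise (fun _ y b => if y == x then b2R b else 1)).
rewrite (eq_Rsum (g := fun z => beta * p z + (if z == x then alpha * p z else 0))) => [|z].
  by rewrite RsumD -Rsum_distrr (proj2 p_dist) Rsum_delta; ring.
rewrite (eq_Rprod (g := fun y => if y == x then flip_prob z y true else 1)) => [|y].
  by rewrite Rprod_delta flip_probE alpha_R_beta_R (eq_sym z); case: (x == z) => /=; ring.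
by case: (y == x) => /=; rewrite ?Rmult_1_r ?Rmult_0_r ?Rplus_0_r ?flip_prob_sum.
Qed.

Lemma E1_bit2 x x' : x != x' ->
  E1 (fun c => bit x c * bit x' c) = beta ^ 2 + alpha * beta * (p x + p x').
Proof.
move=> xx'.
rewrite -(eq_E1 (f := fun c => Rprod (fun y =>
    (fun _ y b => if y == x then b2R b else if y == x' then b2R b else 1) c.1 y (c.2 y)))) => [|c];
  last exact: (Rprod_delta2 (fun y => b2R (c.2 y)) (fun y => b2R (c.2 y)) xx').
rewrite (E1_coordwise (fun _ y b => if y == x then b2R b else if y == x' then b2R b else 1)).
rewrite (eq_Rsum (g := fun z => beta ^ 2 * p z + (if z == x then alpha * beta * p z else 0)
                              + (if z == x' then alpha * beta * p z else 0))) => [|z].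
  by rewrite !RsumD -Rsum_distrr (proj2 p_dist) !Rsum_delta; ring.
rewrite (eq_Rprod (g := fun y => if y == x then flip_prob z y true
                               else if y == x' then flip_prob z y true else 1)) => [|y].
  rewrite Rprod_delta2 // !flip_probE alpha_R_beta_R (eq_sym z x) (eq_sym z x').
  case: (eqVneq x z) => [<-|_]; last by case: (x' == z); ring.
  by rewrite eq_sym (negbTE xx'); ring.
by case: (y == x); case: (y == x') => /=; rewrite ?Rmult_1_r ?Rmult_0_r ?Rplus_0_r ?flip_prob_sum.
Qed.

Definition bit_mean (x : 'I_k) : R := beta + alpha * p x.

Definition cbit (x : 'I_k) (c : report) : R := bit x c - bit_mean x.

Lemma E1_cbit x : E1 (cbit x) = 0.
Proof. by rewrite E1B E1_bit E1_const /bit_mean; ring. Qed.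

Definition bit_cov (x y : 'I_k) : R := E1 (fun c => cbit x c * cbit y c).

Lemma bit_covE x y : bit_cov x y = E1 (fun c => bit x c * bit y c) - bit_mean x * bit_mean y.
Proof.
rewrite /bit_cov (eq_E1 (g := fun c => bit x c * bit y c - bit_mean y * bit x c
                                     - (bit_mean x * bit y c - bit_mean x * bit_mean y))).
  by rewrite !E1B !E1Z !E1_bit E1_const /bit_mean; ring.
by move=> c; rewrite /cbit; ring.
Qed.

Lemma bit_cov_diag x : bit_cov x x = bit_mean x * (1 - bit_mean x).
Proof.
rewrite bit_covE (eq_E1 (g := bit x)) => [|c]; last exact: b2R_sq.
by rewrite E1_bit /bit_mean; ring.
Qed.

Lemma bit_cov_offdiag x y : x != y -> bit_cov x y = - (alpha * p x) * (alpha * p y).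
Proof. by move=> xy; rewrite bit_covE E1_bit2 // /bit_mean alpha_R_beta_R; ring. Qed.

Hypothesis eps_ge0 : 0 <= eps.

Lemma dist_le1 x : p x <= 1.
Proof.
have [p_ge0 <-] := p_dist.
rewrite -{1}(Rsum_delta x p); apply: ler_Rsum => i.
by case: (i == x); [lra | exact: p_ge0].
Qed.

Lemma bit_mean_bounds x : 0 <= bit_mean x <= 1.
Proof.
have := beta_R_bounds eps_ge0; have := alpha_R_beta_R eps.
have := proj1 p_dist x; have := dist_le1 x; rewrite /bit_mean; nra.
Qed.

Lemma bit_cov_sq_le x y : bit_cov x y ^ 2 <= b2R (y == x) + p x * p y.
Proof.
have [p_ge0 _] := p_dist; have px1 := dist_le1 x; have py1 := dist_le1 y.
have [alpha_ge0 alpha_lt1] := alpha_R_bounds eps_ge0.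
case: (eqVneq y x) => [->|yx] /=.
  by rewrite bit_cov_diag; have := bit_mean_bounds x; have := p_ge0 x; nra.
rewrite bit_cov_offdiag 1?eq_sym //=.
have ap_bounds z : 0 <= alpha * p z <= p z by have := p_ge0 z; split; nra.
have [uv_ge0 uv_le] : 0 <= (alpha * p x) * (alpha * p y) <= p x * p y.
  by have := ap_bounds x; have := ap_bounds y; split; nra.
have : p x * p y <= 1 by have := p_ge0 x; have := p_ge0 y; nra.
nra.
Qed.

Lemma Rsum_bit_cov_sq x : Rsum (fun y => bit_cov x y ^ 2) <= 1 + p x.
Proof.
apply: Rle_trans (ler_Rsum (bit_cov_sq_le x)) _.
by rewrite RsumD (Rsum_delta x (fun _ => 1)) -Rsum_distrr (proj2 p_dist); lra.
Qed.

Lemma E1_lin_cbit (a : 'I_k -> R) : E1 (fun c => Rsum (fun x => a x * cbit x c)) = 0.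
Proof.
rewrite E1_sum -(Rsum0 'I_k); apply: eq_Rsum => x.
by rewrite E1Z E1_cbit; ring.
Qed.

Lemma E1_lin_cbit_sq (a : 'I_k -> R) :
  E1 (fun c => Rsum (fun x => a x * cbit x c) ^ 2) <= 2 * Rsum (fun x => a x ^ 2).
Proof.
have [p_ge0 _] := p_dist; have [alpha_ge0 alpha_lt1] := alpha_R_bounds eps_ge0.
pose v x := bit_mean x * (1 - bit_mean x) + (alpha * p x) ^ 2.
have v_le2 x : v x <= 2.
  have ap_bounds : 0 <= alpha * p x <= 1 by have := p_ge0 x; have := dist_le1 x; split; nra.
  have := bit_mean_bounds x; rewrite /v; nra.
have cov_split x y : bit_cov x y = (if x == y then v x else 0) - alpha * p x * (alpha * p y).
  case: (eqVneq x y) => [<-|xy]; first by rewrite bit_cov_diag /v; ring.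
  by rewrite bit_cov_offdiag //; ring.
pose s := Rsum (fun x => a x * (alpha * p x)).
have -> : E1 (fun c => Rsum (fun x => a x * cbit x c) ^ 2) =
          Rsum (fun x => a x ^ 2 * v x) - s * s.
  rewrite (eq_E1 (g := fun c => Rsum (fun x => Rsum (fun y =>
              a x * a y * (cbit x c * cbit y c))))) => [|c]; last first.
    rewrite /= Rmult_1_r Rsum_mulRsum; apply: eq_Rsum => x; apply: eq_Rsum => y; ring.
  rewrite E1_sum /s Rsum_mulRsum -RsumB; apply: eq_Rsum => x.
  rewrite E1_sum -(Rsum_delta x (fun _ => a x ^ 2 * v x)) -RsumB; apply: eq_Rsum => y.
  rewrite E1Z -/(bit_cov x y) cov_split (eq_sym y x).
  by case: eqP => [<-|_]; ring.
have : Rsum (fun x => a x ^ 2 * v x) <= Rsum (fun x => 2 * a x ^ 2).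
  by apply: ler_Rsum => x; have := v_le2 x; have := pow2_ge_0 (a x); nra.
by rewrite -Rsum_distrr; nra.
Qed.

End SingleReport.

Lemma INR_Ncount (n k : nat) (B : {ffun 'I_n -> {ffun 'I_k -> bool}}) x :
  INR (Ncount B x) = Rsum (fun j => b2R (B j x)).
Proof.
rewrite /Ncount -sum1_card (big_morph INR plus_INR (erefl (INR 0))) /Rsum big_mkcond /=.
by apply: eq_bigr => j _; rewrite inE; case: (B j x).
Qed.

Lemma INR_mul_pred_ge0 (n : nat) : 0 <= INR n * (INR n - 1).
Proof.
case: n => [|n]; first by rewrite /=; lra.
by rewrite S_INR; have := pos_INR n; nra.
Qed.

Section Users.
Variables (k n : nat) (eps : R) (p : 'I_k -> R).
Hypothesis p_dist : is_dist p.
Hypothesis eps_ge0 : 0 <= eps.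

Local Notation E1 := (E1 eps p).

Definition user_report (o : outcome n k) (j : 'I_n) : report k := (o.1 j, o.2 j).

Definition En (H : outcome n k -> R) : R := Rsum (fun o => outcome_prob eps p o * H o).

Lemma En_prod (G : 'I_n -> report k -> R) :
  En (fun o => Rprod (fun j => G j (user_report o j))) = Rprod (fun j => E1 (G j)).
Proof.
pose w (z : 'I_k) (b : {ffun 'I_k -> bool}) := p z * rappor_prob eps z b.
rewrite (eq_Rprod (g := fun j => Rsum (fun z => Rsum (fun b => w z b * G j (z, b))))) => [|j];
  last exact: E1_pair.
rewrite (Rprod_Rsum (fun j z => Rsum (fun b => w z b * G j (z, b)))).
pose W (X : {ffun 'I_n -> 'I_k}) (B : {ffun 'I_n -> {ffun 'I_k -> bool}}) :=
  Rprod (fun j => w (X j) (B j) * G j (X j, B j)).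
rewrite (eq_Rsum (g := fun X => Rsum (W X))) => [|X];
  last exact: (Rprod_Rsum (fun j b => w (X j) b * G j (X j, b))).
rewrite -(Rsum_pair W).
by apply: eq_Rsum => o; rewrite /W RprodM.
Qed.

Lemma eq_En f g : f =1 g -> En f = En g.
Proof. by move=> fg; apply: eq_Rsum => o; rewrite fg. Qed.

Lemma EnD f g : En (fun o => f o + g o) = En f + En g.
Proof. by rewrite /En -RsumD; apply: eq_Rsum => o; ring. Qed.

Lemma EnZ a f : En (fun o => a * f o) = a * En f.
Proof. by rewrite /En Rsum_distrr; apply: eq_Rsum => o; ring. Qed.

Lemma En_sum (I : finType) (F : I -> outcome n k -> R) :
  En (fun o => Rsum (F^~ o)) = Rsum (fun x => En (F x)).
Proof. by rewrite /En -exchange_Rsum; apply: eq_Rsum => o; rewrite Rsum_distrr. Qed.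

Lemma En_const a : En (fun _ => a) = a.
Proof.
rewrite (eq_En (g := fun o => a * Rprod (fun j => (fun _ _ => 1) j (user_report o j)))) => [|o];
  last by rewrite Rprod1; ring.
rewrite EnZ (En_prod (fun _ _ => 1)) (eq_Rprod (g := fun _ => 1)) ?Rprod1 => [|j]; first ring.
exact: E1_const.
Qed.

Lemma outcome_prob_ge0 (o : outcome n k) : 0 <= outcome_prob eps p o.
Proof.
have [beta_gt0 beta_le] := beta_R_bounds eps_ge0.
apply: Rprod_ge0 => j; apply: Rmult_le_pos; first exact: (proj1 p_dist).
by apply: Rprod_ge0 => y; case: ifP => _; lra.
Qed.

Lemma ler_En f g : (forall o, f o <= g o) -> En f <= En g.
Proof.
move=> fg; apply: ler_Rsum => o.
by apply: Rmult_le_compat_l; [exact: outcome_prob_ge0 | exact: fg].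
Qed.

Definition at_user (j : 'I_n) (f : report k -> R) (i : 'I_n) (c : report k) : R :=
  if i == j then f c else 1.

Lemma Rprod_at_user (o : outcome n k) j f :
  Rprod (fun i => at_user j f i (user_report o i)) = f (user_report o j).
Proof. exact: (Rprod_delta j (fun i => f (user_report o i))). Qed.

Lemma En2 j l f g :
  En (fun o => f (user_report o j) * g (user_report o l)) =
  if j == l then E1 (fun c => f c * g c) else E1 f * E1 g.
Proof.
rewrite -(eq_En (f := fun o => Rprod (fun i =>
    (fun i c => at_user j f i c * at_user l g i c) i (user_report o i)))) => [|o];
  last by rewrite RprodM !Rprod_at_user.
rewrite (En_prod (fun i c => at_user j f i c * at_user l g i c)) /at_user.
case: (eqVneq j l) => [<-|jl].
  rewrite -(Rprod_delta j (fun _ => E1 (fun c => f c * g c))); apply: eq_Rprod => i.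
  by case: (i == j); rewrite ?Rmult_1_l ?E1_const.
rewrite -(Rprod_delta2 (fun _ => E1 f) (fun _ => E1 g) jl); apply: eq_Rprod => i.
case: (eqVneq i j) => [->|_]; first by rewrite (negbTE jl); apply: eq_E1 => c; ring.
by case: (i == l); rewrite ?Rmult_1_l ?E1_const //; apply: eq_E1 => c; ring.
Qed.

Local Notation Z := (cbit eps p).

Definition cross (x : 'I_k) (j l : 'I_n) (o : outcome n k) : R :=
  if j == l then 0 else Z x (user_report o j) * Z x (user_report o l).

Lemma En_cross_pair x y j l : j != l ->
  En (fun o => Z x (user_report o j) * Z y (user_report o j)
             * (Z x (user_report o l) * Z y (user_report o l))) = bit_cov eps p x y ^ 2.
Proof.
move=> jl; have := En2 j l (fun c => Z x c * Z y c) (fun c => Z x c * Z y c).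
by rewrite (negbTE jl) /= => ->; rewrite /bit_cov /=; ring.
Qed.

(* Only the pairings {j', l'} = {j, l} survive: a user occurring once contributes a
   centred factor. *)
Lemma En_cross_cross x y j l j' l' :
  En (fun o => cross x j l o * cross y j' l' o) <=
  (b2R ((j', l') == (j, l)) + b2R ((j', l') == (l, j))) * bit_cov eps p x y ^ 2.
Proof.
have coef_ge0 : 0 <= b2R ((j', l') == (j, l)) + b2R ((j', l') == (l, j)).
  by case: (_ == _); case: (_ == _); rewrite /=; lra.
have cov2_ge0 := pow2_ge_0 (bit_cov eps p x y).
rewrite /cross; case: (eqVneq j l) => [_|jl].
  by rewrite (eq_En (g := fun _ => 0)) ?En_const => [|o]; [nra | ring].
case: (eqVneq j' l') => [_|jl'].
  by rewrite (eq_En (g := fun _ => 0)) ?En_const => [|o]; [nra | ring].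
case: (eqVneq (j', l') (j, l)) => [[-> ->]|ne1].
  rewrite xpair_eqE (negbTE jl) -(En_cross_pair x y jl) /= Rplus_0_r Rmult_1_l.
  by apply: Req_le; apply: eq_En => o; ring.
case: (eqVneq (j', l') (l, j)) => [[-> ->]|ne2].
  rewrite -(En_cross_pair x y jl) /= Rplus_0_l Rmult_1_l.
  by apply: Req_le; apply: eq_En => o; ring.
rewrite /= Rplus_0_l Rmult_0_l; apply: Req_le.
pose F i c :=
  at_user j (Z x) i c * at_user l (Z x) i c * at_user j' (Z y) i c * at_user l' (Z y) i c.
rewrite (eq_En (g := fun o => Rprod (fun i => F i (user_report o i)))) => [|o];
  last by rewrite /F !RprodM !Rprod_at_user; ring.
rewrite (En_prod F).
have lj : (l == j) = false by rewrite eq_sym (negbTE jl).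
have lone_j : j != j' -> j != l' -> E1 (F j) = 0.
  move=> jj' jl''; rewrite -(E1_cbit eps p_dist x); apply: eq_E1 => c.
  by rewrite /F /at_user eqxx (negbTE jl) (negbTE jj') (negbTE jl''); ring.
have lone_l : l != j' -> l != l' -> E1 (F l) = 0.
  move=> lj' ll'; rewrite -(E1_cbit eps p_dist x); apply: eq_E1 => c.
  by rewrite /F /at_user eqxx lj (negbTE lj') (negbTE ll'); ring.
case: (eqVneq j j') => [jj'|jj'].
  apply: (Rprod_eq0 (j := l)); apply: lone_l; first by rewrite -jj' eq_sym.
  by move: ne1; rewrite -jj' xpair_eqE eqxx eq_sym.
case: (eqVneq j l') => [jl''|jl''].
  apply: (Rprod_eq0 (j := l)); apply: lone_l; last by rewrite -jl'' eq_sym.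
  by move: ne2; rewrite -jl'' xpair_eqE eqxx andbT eq_sym.
exact: (Rprod_eq0 (j := j) (lone_j jj' jl'')).
Qed.

Definition deg_stat (o : outcome n k) : R :=
  Rsum (fun x => Rsum (fun j => Rsum (fun l => cross x j l o))).

Lemma En_deg_stat_sq : En (fun o => deg_stat o ^ 2) <= 2 * INR n ^ 2 * (INR k + 1).
Proof.
rewrite (eq_En (g := fun o => Rsum (fun x => Rsum (fun j => Rsum (fun l => Rsum (fun y =>
    Rsum (fun j' => Rsum (fun l' => cross x j l o * cross y j' l' o)))))))) => [|o]; last first.
  rewrite /deg_stat /= Rmult_1_r Rsum_distrl; apply: eq_Rsum => x.
  rewrite Rsum_distrl; apply: eq_Rsum => j; rewrite Rsum_distrl; apply: eq_Rsum => l.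
  rewrite Rsum_distrr; apply: eq_Rsum => y; rewrite Rsum_distrr; apply: eq_Rsum => j'.
  exact: Rsum_distrr.
apply: Rle_trans (_ : Rsum (fun x => Rsum (fun j : 'I_n => Rsum (fun l : 'I_n =>
                          2 * (1 + p x)))) <= _).
  rewrite En_sum; apply: ler_Rsum => x; rewrite En_sum; apply: ler_Rsum => j.
  rewrite En_sum; apply: ler_Rsum => l; rewrite En_sum.
  apply: Rle_trans (_ : Rsum (fun y => 2 * bit_cov eps p x y ^ 2) <= _).
    apply: ler_Rsum => y; rewrite -(Rsum2_b2R_eq (j, l) (l, j)) En_sum.
    by apply: ler_Rsum => j'; rewrite En_sum; apply: ler_Rsum => l'; apply: En_cross_cross.
  by rewrite -Rsum_distrr; have := Rsum_bit_cov_sq p_dist eps_ge0 x; lra.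
rewrite (eq_Rsum (g := fun x => INR n * (INR n * (2 * (1 + p x))))) => [|x];
  last by rewrite !Rsum_const !card_ord.
by rewrite -!Rsum_distrr RsumD Rsum_const card_ord (proj2 p_dist) /=; lra.
Qed.

Lemma En_sum_users_sq (f : report k -> R) : E1 f = 0 ->
  En (fun o => Rsum (fun j => f (user_report o j)) ^ 2) = INR n * E1 (fun c => f c ^ 2).
Proof.
move=> f_mean0.
rewrite (eq_En (g := fun o => Rsum (fun j => Rsum (fun l =>
    f (user_report o j) * f (user_report o l))))) => [|o];
  last by rewrite /= Rmult_1_r Rsum_mulRsum.
have -> : INR n = INR #|'I_n| by rewrite card_ord.
rewrite En_sum -Rsum_const; apply: eq_Rsum => j.
rewrite En_sum -(Rsum_delta j (fun _ => E1 (fun c => f c ^ 2))); apply: eq_Rsum => l.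
rewrite En2 f_mean0; case: (eqVneq j l) => _; last by ring.
by apply: eq_E1 => c; ring.
Qed.

Definition bias (x : 'I_k) : R := bit_mean eps p x - lambda_R k eps.

Definition bias_sq : R := Rsum (fun x => bias x ^ 2).

Definition lin_term (c : report k) : R := Rsum (fun x => bias x * Z x c).

Definition lin_stat (o : outcome n k) : R := Rsum (fun j => lin_term (user_report o j)).

Lemma statT_decomp (o : outcome n k) :
  statT eps o.2 = INR n * (INR n - 1) * bias_sq + 2 * (INR n - 1) * lin_stat o + deg_stat o.
Proof.
pose q := bit_mean eps p; pose lam := lambda_R k eps.
pose S x := Rsum (fun j => Z x (user_report o j)).
have const_sum c : Rsum (fun _ : 'I_n => c) = INR n * c by rewrite Rsum_const card_ord.
have N_S x : INR (Ncount o.2 x) = S x + INR n * q x.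
  rewrite INR_Ncount -const_sum -RsumD; apply: eq_Rsum => j.
  by rewrite /cbit /bit /q /=; ring.
have Z_sq x : Rsum (fun j => Z x (user_report o j) * Z x (user_report o j)) =
              (1 - 2 * q x) * INR (Ncount o.2 x) + INR n * q x ^ 2.
  rewrite INR_Ncount Rsum_distrr -const_sum -RsumD; apply: eq_Rsum => j.
  rewrite /cbit /bit /q /=; move: (b2R_sq (o.2 j x)); set b := b2R _ => b_sq.
  by transitivity (b * b - 2 * bit_mean eps p x * b + bit_mean eps p x ^ 2);
    [ring | rewrite b_sq; ring].
have term_x x : (INR (Ncount o.2 x) - (INR n - 1) * lam) ^ 2 - INR (Ncount o.2 x) =
    INR n * (INR n - 1) * bias x ^ 2 + 2 * (INR n - 1) * (bias x * S x)
    + Rsum (fun j => Rsum (fun l => cross x j l o)) - (INR n - 1) * lam ^ 2.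
  rewrite (Rsum_offdiag (fun j => Z x (user_report o j))) -/(S x) Z_sq N_S /bias.
  by rewrite -/(q x) -/lam; ring.
have lin_S : lin_stat o = Rsum (fun x => bias x * S x).
  rewrite /lin_stat /lin_term exchange_Rsum; apply: eq_Rsum => x.
  by rewrite Rsum_distrr.
rewrite /statT (eq_Rsum term_x) !RsumB !RsumD -!Rsum_distrr Rsum_const card_ord.
by rewrite /deg_stat lin_S /bias_sq -/lam; ring.
Qed.

Lemma En_statT_dev :
  En (fun o => (statT eps o.2 - INR n * (INR n - 1) * bias_sq) ^ 2) <=
  16 * (INR n - 1) ^ 2 * INR n * bias_sq + 4 * INR n ^ 2 * (INR k + 1).
Proof.
apply: Rle_trans (_ : En (fun o => 8 * (INR n - 1) ^ 2 * lin_stat o ^ 2 + 2 * deg_stat o ^ 2)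
                      <= _).
  apply: ler_En => o; rewrite statT_decomp.
  have := pow2_ge_0 (2 * (INR n - 1) * lin_stat o - deg_stat o); nra.
have lin_sq : En (fun o => lin_stat o ^ 2) <= INR n * (2 * bias_sq).
  rewrite /lin_stat (En_sum_users_sq (f := lin_term)); last exact: E1_lin_cbit.
  by apply: Rmult_le_compat_l; [exact: pos_INR | exact: E1_lin_cbit_sq].
rewrite EnD !EnZ.
have := Rmult_le_compat_l _ _ _ (pow2_ge_0 (INR n - 1)) lin_sq.
have := En_deg_stat_sq; lra.
Qed.

Definition threshold (gamma : R) : R :=
  INR n * (INR n - 1) * alpha_R eps ^ 2 * gamma ^ 2 / INR k.

Lemma thresholdE gamma :
  threshold gamma = INR n * ((INR n - 1) * alpha_R eps ^ 2 * gamma ^ 2) / INR k.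
Proof. by rewrite /threshold /Rdiv; ring. Qed.

Lemma threshold_ge0 gamma : 0 <= threshold gamma.
Proof.
have inv_k_ge0 : 0 <= / INR k.
  have [->|k_gt0] := eqVneq k 0%nat; first by rewrite /= Rinv_0; lra.
  by apply/Rlt_le/Rinv_0_lt_compat/lt_0_INR/ltP; rewrite lt0n.
rewrite /threshold /Rdiv; apply: Rmult_le_pos inv_k_ge0.
do 2 apply: Rmult_le_pos (pow2_ge_0 _) => //.
exact: INR_mul_pred_ge0.
Qed.

Lemma prob_says_uniformE gamma :
  prob_says_uniform n eps gamma p = 1 - prob_says_not_uniform n eps gamma p.
Proof.
rewrite -(En_const 1) /En /prob_says_uniform /prob_says_not_uniform -RsumB.
by apply: eq_Rsum => o; case: test_says_uniform; ring.
Qed.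

Lemma prob_says_not_uniform_le gamma :
  prob_says_not_uniform n eps gamma p * threshold gamma ^ 2 <= En (fun o => statT eps o.2 ^ 2).
Proof.
have t_ge0 := threshold_ge0 gamma.
rewrite (eq_En (g := fun o => (statT eps o.2 - 0) ^ 2)) => [|o]; last by rewrite Rminus_0_r.
rewrite /prob_says_not_uniform (eq_Rsum (g := fun o =>
    if ~~ test_says_uniform eps gamma o.2 then outcome_prob eps p o else 0)) => [|o];
  last by case: test_says_uniform.
apply: Rsum_Chebyshev => [o|o]; first exact: outcome_prob_ge0.
rewrite /test_says_uniform; case: Rlt_dec => //= /Rnot_lt_le T_ge _.
rewrite -/(threshold gamma) in T_ge; nra.
Qed.

Lemma prob_says_uniform_le gamma m : threshold gamma <= m ->
  prob_says_uniform n eps gamma p * (m - threshold gamma) ^ 2 <=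
  En (fun o => (statT eps o.2 - m) ^ 2).
Proof.
move=> t_le_m; rewrite /prob_says_uniform.
apply: Rsum_Chebyshev => [o|o]; first exact: outcome_prob_ge0.
rewrite /test_says_uniform; case: Rlt_dec => //= T_lt _.
rewrite -/(threshold gamma) in T_lt; nra.
Qed.

Lemma biasE x : bias x = alpha_R eps * (p x - / INR k).
Proof. by rewrite /bias /bit_mean /lambda_R /Rdiv; ring. Qed.

Lemma bias_sq_unif : p = @unif k -> bias_sq = 0.
Proof.
move=> p_unif; rewrite /bias_sq -(Rsum0 'I_k); apply: eq_Rsum => x.
by rewrite biasE p_unif /unif; ring.
Qed.

Lemma bias_sq_far gamma : 0 <= gamma -> dTV p (@unif k) > gamma ->
  4 * (alpha_R eps ^ 2 * gamma ^ 2) <= INR k * bias_sq.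
Proof.
move=> gamma_ge0; rewrite /dTV => far.
pose d x := Rabs (p x - @unif k x).
have := Rsum_Cauchy_Schwarz d; rewrite card_ord => CS.
have d_sq : Rsum (fun x => d x * d x) * alpha_R eps ^ 2 = bias_sq.
  rewrite Rsum_distrl; apply: eq_Rsum => x.
  rewrite biasE /d -Rabs_mult Rabs_pos_eq; last exact: Rle_0_sqr.
  by rewrite /unif; ring.
have two_gamma : 2 * gamma <= Rsum d by have : / 2 * Rsum d > gamma := far; lra.
have : 4 * gamma ^ 2 <= INR k * Rsum (fun x => d x * d x) by nra.
rewrite -d_sq; have := pow2_ge_0 (alpha_R eps); nra.
Qed.

Lemma En_statT_sq_unif : p = @unif k ->
  En (fun o => statT eps o.2 ^ 2) <= 4 * INR n ^ 2 * (INR k + 1).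
Proof.
move=> p_unif; have := En_statT_dev; rewrite (bias_sq_unif p_unif).
by rewrite (eq_En (g := fun o => statT eps o.2 ^ 2)) => [|o]; [lra | ring].
Qed.

End Users.

Lemma INR_ge2 (k : nat) : (2 <= k)%nat -> 2 <= INR k.
Proof. by move=> /leP k_ge2; have := le_INR _ _ k_ge2; rewrite /=; lra. Qed.

Lemma Rpower_3_2 (K : R) : 1 <= K -> K <= Rpower K (3 / 2) /\ Rpower K (3 / 2) ^ 2 = K ^ 3.
Proof.
move=> K_ge1; split.
  by rewrite -{1}(Rpower_1 K); [apply: Rle_Rpower; lra | lra].
rewrite /= Rmult_1_r -Rpower_plus (_ : 3 / 2 + 3 / 2 = INR 3); last by rewrite /=; field.
by rewrite Rpower_pow; lra.
Qed.

(* The constant 7200 = 2 * 36 * 100 absorbs n - 1 >= n / 2 and alpha >= eps / 6 and leaves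
   (n - 1) alpha^2 gamma^2 >= 100 k^(3/2). *)
Lemma sample_size_signal (k n : nat) (gamma eps : R) :
  (2 <= k)%nat -> 0 < gamma <= 1 -> 0 < eps <= 1 ->
  INR n >= 7200 * Rpower (INR k) (3 / 2) / (gamma ^ 2 * eps ^ 2) ->
  2 <= INR n /\ 0 <= (INR n - 1) * alpha_R eps ^ 2 * gamma ^ 2 /\
  10000 * INR k ^ 3 <= ((INR n - 1) * alpha_R eps ^ 2 * gamma ^ 2) ^ 2.
Proof.
move=> /INR_ge2 K_ge2 gamma_bd eps_bd n_ge.
have K_ge1 : 1 <= INR k by lra.
have [s_ge s_sq] := Rpower_3_2 K_ge1.
move: n_ge s_ge s_sq; set s := Rpower _ _; set N := INR n => n_ge s_ge s_sq.
set X := (N - 1) * _ * _.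
have ge_pos : 0 < gamma ^ 2 * eps ^ 2 by apply: Rmult_lt_0_compat; apply: pow_lt; lra.
have ge_le1 : gamma ^ 2 * eps ^ 2 <= 1.
  have sq_le1 x : 0 < x <= 1 -> 0 <= x ^ 2 <= 1 by move=> x_bd; rewrite /=; split; nra.
  have := sq_le1 _ gamma_bd; have := sq_le1 _ eps_bd; nra.
have N_ge : 7200 * s <= N * (gamma ^ 2 * eps ^ 2).
  have -> : 7200 * s = 7200 * s / (gamma ^ 2 * eps ^ 2) * (gamma ^ 2 * eps ^ 2) by field; lra.
  by apply: Rmult_le_compat_r; lra.
have alpha_sq : eps ^ 2 / 36 <= alpha_R eps ^ 2.
  have := alpha_R_ge (Rlt_le _ _ (proj1 eps_bd)) (proj2 eps_bd) => alpha_ge.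
  have : eps / 6 * (eps / 6) <= alpha_R eps * alpha_R eps by apply: Rmult_le_compat; lra.
  rewrite /=; lra.
have X_ge : 100 * s <= X.
  have : N * gamma ^ 2 * (eps ^ 2 / 36) <= N * gamma ^ 2 * alpha_R eps ^ 2.
    apply: Rmult_le_compat_l => //.
    by apply: Rmult_le_pos; [exact: pos_INR | exact: pow2_ge_0].
  rewrite /X; nra.
split; first nra.
by split; nra.
Qed.

Lemma var_le_gap_uniform (N K X : R) : 2 <= K -> 10000 * K ^ 3 <= X ^ 2 ->
  3 * (4 * N ^ 2 * (K + 1)) <= (N * X / K) ^ 2.
Proof.
move=> K_ge2 X_sq; set Y := X / K.
have K2_gt0 : 0 < K ^ 2 by apply: pow_lt; lra.
have Y_sq : 10000 * K <= Y ^ 2.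
  apply: (Rmult_le_reg_r (K ^ 2)) => //.
  have -> : Y ^ 2 * K ^ 2 = X ^ 2 by rewrite /Y; field; lra.
  by rewrite (_ : 10000 * K * K ^ 2 = 10000 * K ^ 3) //; ring.
have -> : (N * X / K) ^ 2 = N ^ 2 * Y ^ 2 by rewrite /Y; field; lra.
have := pow2_ge_0 N; nra.
Qed.

Lemma var_le_gap_far (N K X M : R) : 2 <= K -> 2 <= N -> 0 <= X -> 10000 * K ^ 3 <= X ^ 2 ->
  4 * X <= (N - 1) * (K * M) ->
  N * X / K < N * (N - 1) * M /\
  3 * (16 * (N - 1) ^ 2 * N * M + 4 * N ^ 2 * (K + 1)) <= (N * (N - 1) * M - N * X / K) ^ 2.
Proof.
move=> K_ge2 N_ge2 X_ge0 X_sq far; set Y := (N - 1) * M.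
have K2_gt0 : 0 < K ^ 2 by apply: pow_lt; lra.
have YK : 4 * X <= Y * K by rewrite /Y; lra.
have Y_sq : 160000 * K <= Y ^ 2.
  apply: (Rmult_le_reg_r (K ^ 2)) => //.
  have : 16 * X ^ 2 <= (Y * K) ^ 2 by rewrite /=; nra.
  rewrite (_ : Y ^ 2 * K ^ 2 = (Y * K) ^ 2); last by ring.
  rewrite (_ : 160000 * K * K ^ 2 = 16 * (10000 * K ^ 3)); last by ring.
  lra.
have Y_ge : 400 <= Y.
  have : 0 <= Y by apply: (Rmult_le_reg_r K); lra.
  rewrite /= in Y_sq; nra.
have t_le : N * X / K <= N * Y / 4.
  apply: (Rmult_le_reg_r K); first lra.
  by rewrite /Rdiv Rmult_assoc Rinv_l; nra.
have -> : N * (N - 1) * M = N * Y by rewrite /Y; ring.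
split; first nra.
have dev : 9 / 16 * (N ^ 2 * Y ^ 2) <= (N * Y - N * X / K) ^ 2.
  have : 0 <= N * X / K.
    by apply: Rmult_le_pos; [nra | apply/Rlt_le/Rinv_0_lt_compat; lra].
  rewrite /=; nra.
have lin : 16 * (N - 1) ^ 2 * N * M <= 16 * N ^ 2 * Y.
  rewrite (_ : 16 * (N - 1) ^ 2 * N * M = 16 * (N * Y) * (N - 1)); last by rewrite /Y; ring.
  rewrite (_ : 16 * N ^ 2 * Y = 16 * (N * Y) * N); last by ring.
  by apply: Rmult_le_compat_l; nra.
have := pow2_ge_0 N; rewrite /= in Y_sq lin dev *; nra.
Qed.

Lemma tester_accepts_uniform (k n : nat) (gamma eps : R) (p : 'I_k -> R) :
  (2 <= k)%nat -> 0 < gamma <= 1 -> 0 < eps <= 1 ->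
  INR n >= 7200 * Rpower (INR k) (3 / 2) / (gamma ^ 2 * eps ^ 2) ->
  is_dist p -> p = @unif k -> prob_says_uniform n eps gamma p >= 2 / 3.
Proof.
move=> k_ge2 gamma_bd eps_bd n_ge p_dist p_unif.
have eps_ge0 : 0 <= eps by lra.
have [N_ge2 [_ X_sq]] := sample_size_signal k_ge2 gamma_bd eps_bd n_ge.
have := var_le_gap_uniform (INR n) (INR_ge2 k_ge2) X_sq; rewrite -thresholdE => budget.
have cheb := Rle_trans _ _ _ (prob_says_not_uniform_le n p_dist eps_ge0 gamma)
                          (En_statT_sq_unif n p_dist eps_ge0 p_unif).
have var_gt0 : 0 < 4 * INR n ^ 2 * (INR k + 1) by have := INR_ge2 k_ge2; rewrite /=; nra.
rewrite prob_says_uniformE //; suff : prob_says_not_uniform n eps gamma p <= / 3 by lra.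
by apply: (Rmult_le_reg_r (threshold k n eps gamma ^ 2)); lra.
Qed.

Lemma tester_rejects_far (k n : nat) (gamma eps : R) (p : 'I_k -> R) :
  (2 <= k)%nat -> 0 < gamma <= 1 -> 0 < eps <= 1 ->
  INR n >= 7200 * Rpower (INR k) (3 / 2) / (gamma ^ 2 * eps ^ 2) ->
  is_dist p -> dTV p (@unif k) > gamma -> prob_says_not_uniform n eps gamma p >= 2 / 3.
Proof.
move=> k_ge2 gamma_bd eps_bd n_ge p_dist far.
have eps_ge0 : 0 <= eps by lra.
have [N_ge2 [X_ge0 X_sq]] := sample_size_signal k_ge2 gamma_bd eps_bd n_ge.
have signal : 4 * ((INR n - 1) * alpha_R eps ^ 2 * gamma ^ 2) <=
              (INR n - 1) * (INR k * bias_sq eps p).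
  have := bias_sq_far eps (Rlt_le _ _ (proj1 gamma_bd)) far.
  by move/(Rmult_le_compat_l (INR n - 1)); lra.
have [t_lt budget] := var_le_gap_far (INR_ge2 k_ge2) N_ge2 X_ge0 X_sq signal.
rewrite -thresholdE in t_lt budget.
have cheb := Rle_trans _ _ _ (prob_says_uniform_le p_dist eps_ge0 (Rlt_le _ _ t_lt))
                          (En_statT_dev n p_dist eps_ge0).
have gap_gt0 : 0 < (INR n * (INR n - 1) * bias_sq eps p - threshold k n eps gamma) ^ 2.
  by apply: pow_lt; lra.
have := prob_says_uniformE n eps p_dist gamma.
suff : prob_says_uniform n eps gamma p <= / 3 by lra.
by apply: (Rmult_le_reg_r _ _ _ gap_gt0); lra.
Qed.

Theorem theorem3p1 :
  exists C : R, 0 < C /\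
    forall (k : nat) (gamma eps : R) (n : nat),
      (2 <= k)%nat ->
      0 < gamma <= 1 ->
      0 < eps <= 1 ->
      INR n >= C * Rpower (INR k) (3 / 2) / (gamma ^ 2 * eps ^ 2) ->
      is_uniformity_tester n k eps gamma.
Proof.
exists 7200; split; first lra.
move=> k gamma eps n k_ge2 gamma_bd eps_bd n_ge p p_dist; split.
- exact: tester_accepts_uniform.
- exact: tester_rejects_far.
Qed.
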